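(* Let $F$ be a perfect field of characteristic $p>0$, let $l,m$ be positive integers with $\gcd(l,m)=1$, let $m=ls+k$ and $s=tp+r$ be divisions with remainder with $1\le k<l$ and $0\le r<p$, and let $w\in F[x]$ be monic of degree $s$. Then $$\bigl(p\nmid l \text{ and } kw+lxw'=0\bigr)\iff \bigl(p\mid m \text{ and there exists a monic } u\in F[x] \text{ with } w=x^ru^p\bigr).$$
   Context: $w'$ denotes the formal derivative of $w$. *)

From mathcomp Require Import all_boot all_order all_algebra.
Set Implicit Arguments. Unset Strict Implicit. Unset Printing Implicit Defensive.
Import GRing.Theory.
Local Open Scope ring_scope.

Definition perfect_field (F : fieldType) (p : nat) : Prop :=
  forall x : F, exists y : F, y ^+ p = x.

From mathcomp Require Import all_boot all_order all_algebra.
Set Implicit Arguments. Unset Strict Implicit. Unset Printing Implicit Defensive.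
Import GRing.Theory.
Local Open Scope ring_scope.

(* Comparing coefficients, [k w + l X w' = 0] says [(k + l i) w_i = 0] for all [i].
   As [p] does not divide [l], the nonzero coefficients of [w] then sit in degrees
   [i = s = r mod p], so [w = X^r v(X^p)], and over a perfect field [v(X^p) = u^p]
   with the coefficients of [u] the [p]-th roots of those of [v]. Conversely
   [X (X^r u^p)' = r X^r u^p] in characteristic [p], and [k + l r = m = 0 mod p]. *)

Lemma modn_eq_of_dvdn_addM (p l k i j : nat) : prime p -> ~~ (p %| l)%N ->
  (p %| k + l * i)%N -> (p %| k + l * j)%N -> i = j %[mod p].
Proof.
move=> p_pr pNl; wlog le_ij : i j / (i <= j)%N => [hwlog|].
  by case: (leqP i j) => [|/ltnW] le ? ?; [|apply/esym]; apply: hwlog.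
move=> dvd_i dvd_j; apply/esym/eqP; rewrite eqn_mod_dvd //.
have : (p %| (k + l * j) - (k + l * i))%N by apply: dvdn_sub.
by rewrite subnDl -mulnBr Euclid_dvdM // (negbTE pNl).
Qed.

Lemma coef_Xderiv (R : nzRingType) (w : {poly R}) i : ('X * w^`())`_i = w`_i *+ i.
Proof. by case: i => [|i]; rewrite coefXM ?mulr0n //= coef_deriv. Qed.

Lemma coef_Euler_eq0 (R : comNzRingType) (k l : nat) (w : {poly R}) i :
  k%:R *: w + l%:R *: ('X * w^`()) = 0 -> (k + l * i)%:R * w`_i = 0.
Proof.
move/(congr1 (coefp i)); rewrite /= coefD !coefZ coef_Xderiv coef0.
move=> coef_eq0; rewrite -[RHS]coef_eq0 natrD natrM mulrDl.
by rewrite -mulrA [i%:R * _]mulr_natl.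
Qed.

Section PolyPowers.

Variables (F : fieldType) (p : nat).
Hypothesis pP : p \in [pchar F].

Let p_gt0 : (0 < p)%N := prime_gt0 (pcharf_prime pP).
Let pPpoly : p \in [pchar {poly F}]. Proof. by rewrite pchar_poly. Qed.

Lemma exprp_comp_Xn (u : {poly F}) :
  u ^+ p = map_poly (pFrobenius_aut pP) u \Po 'X^p.
Proof.
rewrite comp_polyE size_map_poly -{1}[u]coefK poly_def.
rewrite -(pFrobenius_autE pPpoly) rmorph_sum; apply: eq_bigr => i _ /=.
by rewrite coef_map pFrobenius_autE /= exprZn -!exprM mulnC.
Qed.

Lemma deriv_exprp (u : {poly F}) : (u ^+ p)^`() = 0.
Proof. by rewrite deriv_exp (mulrn_pchar pPpoly). Qed.

Lemma Xderiv_XnM_exprp r (u : {poly F}) :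
  'X * ('X^r * u ^+ p)^`() = r%:R *: ('X^r * u ^+ p).
Proof.
rewrite derivM deriv_exprp mulr0 addr0 derivXn scaler_nat.
case: r => [|r]; first by rewrite !mulr0n mul0r mulr0.
by rewrite mulrnAl mulrnAr mulrA -exprS.
Qed.

Lemma monic_of_XnM_exprp r (u : {poly F}) :
  'X^r * u ^+ p \is monic -> u \is monic.
Proof.
rewrite !monicE lead_coefM lead_coefXn mul1r lead_coef_exp => /eqP lead_up.
apply/eqP/(fmorph_inj (pFrobenius_aut pP)).
by rewrite /= !pFrobenius_autE lead_up expr1n.
Qed.

Hypothesis perfF : perfect_field F p.

Lemma map_Frobenius_surj (v : {poly F}) :
  exists u, map_poly (pFrobenius_aut pP) u = v.
Proof.
have root x : exists y : F, y ^+ p == x by have [y <-] := perfF x; exists y.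
exists (\poly_(i < size v) xchoose (root v`_i)).
apply/polyP => i; rewrite coef_map coef_poly /= pFrobenius_autE.
case: ltnP => [_|le_v_i]; first exact/eqP/(xchooseP (root _)).
by rewrite expr0n gtn_eqF // nth_default.
Qed.

Lemma exprp_root (v : {poly F}) :
  (forall i, v`_i != 0 -> (p %| i)%N) -> exists u, v = u ^+ p.
Proof.
move=> supp_v.
have [u Eu] := map_Frobenius_surj (\poly_(j < size v) v`_(j * p)).
exists u; rewrite exprp_comp_Xn Eu; apply/polyP => i.
rewrite coef_comp_poly_Xn // coef_poly.
have [/dvdnP[j ->]|pNi] := boolP (p %| i)%N.
  rewrite mulnK //; case: ltnP => // le_v_j.
  by rewrite nth_default // (leq_trans le_v_j) // leq_pmulr.
by apply: contraNeq pNi; apply: supp_v.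
Qed.

Lemma eq_XnM_exprp r (w : {poly F}) : (r < p)%N ->
  (forall i, w`_i != 0 -> (i %% p = r)%N) -> exists u, w = 'X^r * u ^+ p.
Proof.
move=> lt_r_p supp_w; have [u Eu] : exists u, drop_poly r w = u ^+ p.
  apply: exprp_root => i; rewrite coef_drop_poly => /supp_w.
  by move/eqP; rewrite -{2}(modn_small lt_r_p) -{2}[r]add0n eqn_modDr mod0n.
exists u; rewrite -Eu; apply/polyP => i; rewrite coefXnM coef_drop_poly.
case: ltnP => [lt_i_r|]; last by move/subnK->.
by apply: contraTeq lt_i_r => /supp_w <-; rewrite -leqNgt leq_mod.
Qed.

End PolyPowers.

Theorem lemma4p9 (F : fieldType) (p : nat) (l m s k t r : nat) (w : {poly F}) :
  p \in [pchar F] -> perfect_field F p ->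
  (0 < l)%N -> (0 < m)%N -> coprime l m ->
  m = (l * s + k)%N -> (1 <= k)%N -> (k < l)%N ->
  s = (t * p + r)%N -> (r < p)%N ->
  w \is monic -> size w = s.+1 ->
  ((~~ (p %| l)%N /\ k%:R *: w + l%:R *: ('X * w^`()) = 0)
   <-> ((p %| m)%N /\ exists u : {poly F}, u \is monic /\ w = 'X^r * u ^+ p)).
Proof.
move=> pP perfF _ _ cop_lm Em _ _ Es lt_r_p w_monic size_w.
have p_pr := pcharf_prime pP.
split=> [[pNl Euler_w] | [p_dvd_m [u [_ ->]]]].
- have dvd_coef i : w`_i != 0 -> (p %| k + l * i)%N.
    move=> w_i_neq0; have /eqP := coef_Euler_eq0 i Euler_w.
    by rewrite mulf_eq0 (negbTE w_i_neq0) orbF -(dvdn_pcharf pP).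
  have p_dvd_m : (p %| m)%N.
    rewrite Em addnC dvd_coef // -[s]/(s.+1.-1) -size_w -lead_coefE.
    by rewrite (monicP w_monic) oner_neq0.
  have [u Ew] : exists u, w = 'X^r * u ^+ p.
    apply: eq_XnM_exprp => // i /dvd_coef dvd_i.
    rewrite -(modn_small lt_r_p) -(modnMDl t r p) -Es.
    by apply: modn_eq_of_dvdn_addM p_pr pNl dvd_i _; rewrite addnC -Em.
  split=> //; exists u; split=> //.
  by apply: (monic_of_XnM_exprp pP (r := r)); rewrite -Ew.
- split.
    apply/negP => p_dvd_l; have : (p %| gcdn l m)%N by rewrite dvdn_gcd p_dvd_l.
    by rewrite (eqP cop_lm) dvdn1 => /eqP p_eq1; rewrite p_eq1 in p_pr.
  have /eqP klr_eq0 : (k + l * r)%:R == 0 :> F.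
    rewrite -(dvdn_pcharf pP); move: p_dvd_m.
    by rewrite Em Es mulnDr mulnA -addnA dvdn_addr ?dvdn_mull // addnC.
  rewrite (Xderiv_XnM_exprp pP) [l%:R *: _]scalerA -scalerDl -natrM -natrD.
  by rewrite klr_eq0 scale0r.
Qed.
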